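(* Let $I$ be a resident-minimal and hospital-complete instance and suppose there is a prescription $(P,X)$ for $I$. Then there is a simple extension $J$ of $I$ such that $\mathrm{prop}(J)\setminus\mathrm{prop}(I)\subseteq P$, $\mathrm{rej}(J)\setminus\mathrm{rej}(I)\subseteq X$, and $\mathrm{tgs}(P,X)\subseteq\mathrm{rej}(J)$.
   Context: An instance $I$ consists of finite disjoint sets $R$ (residents) and $H$ (hospitals), a positive integer quota $q_h$ for each $h\in H$, for each $r\in R$ a preference list of $r$ (a sequence of distinct members of $H$, not necessarily all), and for each $h\in H$ a preference list of $h$ (a sequence of distinct members of $R$). A list is complete if it contains every member of the opposite side; an instance is hospital-complete if every hospital's list is complete. A match is a pair $(r,h)\in R\times H$. For a set $M$ of matches, $\mathrm{res}_h M=\{r:(r,h)\in M\}$, $\mathrm{res}\,M=\{r:(r,h)\in M\text{ for some }h\}$. $J$ is an extension of $I$ (same $R,H$, quotas) if every list of $J$ has the corresponding list of $I$ as a prefix. An event is $(r,h)^+$ (proposal) or $(r,h)^-$ (rejection). For an event sequence $\sigma$, $\mathrm{prop}(\sigma)$, $\mathrm{rej}(\sigma)$ are the sets of matches proposed/rejected in $\sigma$ and $\mathrm{tent}(\sigma)=\mathrm{prop}(\sigma)\setminus\mathrm{rej}(\sigma)$. A match $(r,h)\in M$ is ousted from $M$ in $I$ if the list of $h$ in $I$ contains at least $q_h$ residents of $\mathrm{res}_h M$ and either $r$ is not on it or $r$ is preceded on it by at least $q_h$ residents of $\mathrm{res}_h M$. $I$-feasible sequences: the empty sequence is $I$-feasible;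 if $\sigma$ is $I$-feasible then $\sigma+(r,h)^+$ is $I$-feasible if $r\notin\mathrm{res}\,\mathrm{tent}(\sigma)$, $(r,h)\notin\mathrm{prop}(\sigma)$, $h$ is on the list of $r$ in $I$ and $(r,h')\in\mathrm{rej}(\sigma)$ for every $h'$ preceding $h$ on it; and $\sigma+(r,h)^-$ is $I$-feasible if $(r,h)$ is ousted from $\mathrm{prop}(\sigma)$ in $I$ and $(r,h)\notin\mathrm{rej}(\sigma)$. All maximal $I$-feasible sequences contain the same events; $\mathrm{prop}(I),\mathrm{rej}(I),\mathrm{tent}(I)$ denote $\mathrm{prop}(\sigma),\mathrm{rej}(\sigma),\mathrm{tent}(\sigma)$ for any maximal $I$-feasible $\sigma$. $I$ is resident-minimal if $\mathrm{prop}(I)$ equals the set of matches $(r,h)$ with $h$ on the list of $r$ in $I$. An extension $J$ of $I$ is simple if $(\mathrm{prop}(J)\setminus\mathrm{prop}(I))\cap(\mathrm{rej}(J)\setminus\mathrm{rej}(I))=\emptyset$. For a resident-minimal and hospital-complete instance $I$, a prescription for $I$ is a pair $(P,X)$ of sets of matches such that: (P1) $P\cap\mathrm{prop}(I)=\emptyset$; (P2) for each $r\in R$ there is at most one $h$ with $(r,h)\in P$; (P3) $X\subseteq\mathrm{tent}(I)$; (P4) $\mathrm{res}\,P\cap\mathrm{res}\,\mathrm{tent}(I)\subseteq\mathrm{res}\,X$; (P5) for each $h\in H$, $|\mathrm{res}_h(P\cup(\mathrm{tent}(I)\setminus X))|\le q_h$, with equality if $\mathrm{res}_h X\neq\emptyset$;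 (P6) for each $h\in H$, every member of $\mathrm{res}_h(P\cup(\mathrm{tent}(I)\setminus X))$ precedes all members of $\mathrm{res}_h X$ in the list of $h$ in $I$. Its target set is $\mathrm{tgs}(P,X)=\{(r,h)\in X: r\notin\mathrm{res}\,P\}$. *)

From mathcomp Require Import all_boot.
From Stdlib Require Import ClassicalEpsilon.

Set Implicit Arguments.
Unset Strict Implicit.
Unset Printing Implicit Defensive.

Section HR.
Variables (R H : finType).

Record instance := Instance {
  quota : H -> nat;
  rlist : R -> seq H;
  hlist : H -> seq R }.

Definition valid_instance (I : instance) : Prop :=
  (forall h, 0 < quota I h) /\ (forall r, uniq (rlist I r)) /\
  (forall h, uniq (hlist I h)).

Definition match_t := (R * H)%type.

Definition precedes (T : eqType) (x y : T) (s : seq T) : bool :=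
  (x \in s) && (index x s < index y s).

Definition hospital_complete (I : instance) : Prop :=
  forall h r, r \in hlist I h.

Definition extension (I J : instance) : Prop :=
  (forall h, quota J h = quota I h) /\
  (forall r, prefix (rlist I r) (rlist J r)) /\
  (forall h, prefix (hlist I h) (hlist J h)).

Definition res_h (M : {set match_t}) (h : H) : {set R} := [set r | (r, h) \in M].
Definition res (M : {set match_t}) : {set R} := [set m.1 | m in M].

(* events: (true, m) = proposal m^+, (false, m) = rejection m^- *)
Definition event := (bool * match_t)%type.

Definition propS (s : seq event) : {set match_t} := [set m | (true, m) \in s].
Definition rejS (s : seq event) : {set match_t} := [set m | (false, m) \in s].
Definition tentS (s : seq event) : {set match_t} := propS s :\: rejS s.

Definition ousted (I : instance) (M : {set match_t}) (r : R) (h : H) : bool :=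
  [&& (r, h) \in M,
      quota I h <= count (fun r' => r' \in res_h M h) (hlist I h) &
      (r \notin hlist I h) ||
      (quota I h <= count (fun r' => r' \in res_h M h)
                          (take (index r (hlist I h)) (hlist I h)))].

Inductive feasible (I : instance) : seq event -> Prop :=
| feas_nil : feasible I [::]
| feas_prop s r h :
    feasible I s ->
    r \notin res (tentS s) ->
    (r, h) \notin propS s ->
    h \in rlist I r ->
    (forall h', precedes h' h (rlist I r) -> (r, h') \in rejS s) ->
    feasible I (rcons s (true, (r, h)))
| feas_rej s r h :
    feasible I s ->
    ousted I (propS s) r h ->
    (r, h) \notin rejS s ->
    feasible I (rcons s (false, (r, h))).

Definition maximal_feasible (I : instance) (s : seq event) : Prop :=
  feasible I s /\ forall e, ~ feasible I (rcons s e).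

(* a (fixed, arbitrary) maximal I-feasible sequence; all such sequences
   contain the same events, so prop/rej/tent of I do not depend on the choice *)
Definition max_seq (I : instance) : seq event :=
  epsilon (inhabits [::]) (maximal_feasible I).

Definition propI (I : instance) := propS (max_seq I).
Definition rejI (I : instance) := rejS (max_seq I).
Definition tentI (I : instance) := tentS (max_seq I).

Definition resident_minimal (I : instance) : Prop :=
  propI I = [set m : match_t | m.2 \in rlist I m.1].

Definition simple_extension (I J : instance) : Prop :=
  extension I J /\ (propI J :\: propI I) :&: (rejI J :\: rejI I) = set0.

Definition prescription (I : instance) (P X : {set match_t}) : Prop :=
  P :&: propI I = set0 /\
  (* P2 *) (forall r h h', (r, h) \in P -> (r, h') \in P -> h = h') /\
  X \subset tentI I /\
  (* P4 *) res P :&: res (tentI I) \subset res X /\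
  (* P5 *) (forall h, #|res_h (P :|: (tentI I :\: X)) h| <= quota I h /\
               (res_h X h != set0 -> #|res_h (P :|: (tentI I :\: X)) h| = quota I h)) /\
  (* P6 *) (forall h r r', r \in res_h (P :|: (tentI I :\: X)) h ->
               r' \in res_h X h -> precedes r r' (hlist I h)).

Definition tgs (P X : {set match_t}) : {set match_t} :=
  [set m in X | m.1 \notin res P].

End HR.

(* J is I with each resident's list extended by the hospital P prescribes to it.
   Since every list of I is a prefix of the corresponding list of J, a maximal
   I-feasible sequence is J-feasible, so prop(I) and rej(I) grow into prop(J) and
   rej(J), and every new proposal lies in P.  A match of prop(I) ∪ P that would be
   ousted from prop(I) ∪ P is already in rej(I) ∪ X: by (P6) the residents of
   P ∪ (tent(I) \ X) at h come first on h's list, and by (P5) they do not exceed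
   the quota.  Hence every new rejection lies in X.  Finally, at each hospital the
   quota bounds tent(J), and the equality in (P5) turns this into: the X-matches
   left unrejected at h are at most as many as the P-matches left unproposed at h.
   A resident with an unproposed P-match holds a tentative match in J, which by
   (P4) is its X-match; as P is functional (P2), summing over hospitals leaves no
   room for an unrejected X-match of a resident outside res P. *)

From mathcomp Require Import all_boot zify.
From Stdlib Require Import ClassicalEpsilon Classical.

Set Implicit Arguments.
Unset Strict Implicit.
Unset Printing Implicit Defensive.

Lemma count_take_card (T : finType) (A : {set T}) (l : seq T) k :
  uniq l -> k <= size l ->
  count (fun x => x \in A) (take k l) = #|[set x in A | index x l < k]|.
Proof.
move=> Ul kl; rewrite -size_filter -(card_uniqP (filter_uniq _ (take_uniq k Ul))).
by apply: eq_card => x; rewrite mem_filter in_take_leq // !inE.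
Qed.

Lemma precedes_catl (T : eqType) (x y : T) s1 s2 :
  y \in s1 -> precedes x y (s1 ++ s2) -> precedes x y s1.
Proof.
rewrite /precedes mem_cat !index_cat => ys1; rewrite ys1.
by case: (boolP (x \in s1)) => //= _ /andP[_]; move: ys1; rewrite -index_mem; lia.
Qed.

Lemma card_disjU (T : finType) (A B : {set T}) :
  [disjoint A & B] -> #|A :|: B| = #|A| + #|B|.
Proof. by move=> dAB; apply/eqP; rewrite (leq_card_setU A B).2. Qed.

Section ResidentsAtHospital.
Variables (R H : finType).
Implicit Types (M N : {set match_t R H}) (m : match_t R H) (r : R) (h : H).

Lemma res_hE M h r : (r \in res_h M h) = ((r, h) \in M).
Proof. by rewrite inE. Qed.

Lemma mem_res M m : m \in M -> m.1 \in res M.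
Proof. exact: imset_f. Qed.

Lemma res_hS M N h : M \subset N -> res_h M h \subset res_h N h.
Proof. by move=> MN; apply/subsetP => r; rewrite !res_hE; apply: (subsetP MN). Qed.

Lemma res_hU M N h : res_h (M :|: N) h = res_h M h :|: res_h N h.
Proof. by apply/setP => r; rewrite !(in_setU, res_hE). Qed.

Lemma res_h_disjoint M N h : [disjoint M & N] -> [disjoint res_h M h & res_h N h].
Proof.
rewrite !disjoints_subset => /subsetP dMN; apply/subsetP => r.
by rewrite res_hE => /dMN; rewrite !inE.
Qed.

Lemma card_sum_res_h M : #|M| = \sum_h #|res_h M h|.
Proof.
rewrite -sum1_card (partition_big snd xpredT) //=; apply: eq_bigr => h _.
rewrite sum1_card.
transitivity #|(fun r => (r, h)) @: res_h M h|; last by rewrite card_imset // => r r' [].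
apply: eq_card => -[r g] /=.
apply/idP/imsetP => [/andP[rgM /eqP /= <-] | [r' r'M [-> ->]]]; first by exists r; rewrite ?res_hE.
by apply/andP; rewrite -res_hE.
Qed.

End ResidentsAtHospital.

Section FeasibleSequences.
Variables (R H : finType).
Implicit Types (K : instance R H) (s t : seq (event R H)) (M N : {set match_t R H}).
Implicit Types (r : R) (h : H) (m : match_t R H).

Lemma propS_rcons_prop s m : propS (rcons s (true, m)) = m |: propS s.
Proof. by apply/setP => x; rewrite !inE mem_rcons in_cons xpair_eqE eqxx. Qed.

Lemma propS_rcons_rej s m : propS (rcons s (false, m)) = propS s.
Proof. by apply/setP => x; rewrite !inE mem_rcons in_cons xpair_eqE. Qed.

Lemma rejS_rcons_prop s m : rejS (rcons s (true, m)) = rejS s.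
Proof. by apply/setP => x; rewrite !inE mem_rcons in_cons xpair_eqE. Qed.

Lemma rejS_rcons_rej s m : rejS (rcons s (false, m)) = m |: rejS s.
Proof. by apply/setP => x; rewrite !inE mem_rcons in_cons xpair_eqE eqxx. Qed.

Lemma ousted_mem K M r h : ousted K M r h -> (r, h) \in M.
Proof. by case/and3P. Qed.

Lemma ousted_count K M r h : r \in hlist K h -> ousted K M r h ->
  quota K h <= count (fun x => x \in res_h M h) (take (index r (hlist K h)) (hlist K h)).
Proof. by move=> rh /and3P[_ _]; rewrite rh. Qed.

Lemma ousted_subset K M N r h : M \subset N -> ousted K M r h -> ousted K N r h.
Proof.
move=> MN /and3P[rM q_le out]; have le := sub_count (subsetP (res_hS h MN)).
apply/and3P; split; [exact: (subsetP MN) | exact: leq_trans q_le (le _) |].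
by case/orP: out => [-> // | q_le']; rewrite (leq_trans q_le' (le _)) orbT.
Qed.

Lemma feasible_uniq K s : feasible K s -> uniq s.
Proof.
elim=> // s0 r h _ Us0 => [_ fresh _ _ | _ fresh]; rewrite rcons_uniq Us0 andbT;
  by move: fresh; rewrite inE.
Qed.

Lemma feasible_prop_listed K s r h : feasible K s -> (r, h) \in propS s -> h \in rlist K r.
Proof.
elim=> [|s0 r' h' _ IH _ _ h'L _ | s0 r' h' _ IH _ _]; first by rewrite inE.
- by rewrite propS_rcons_prop in_setU1 => /orP[/eqP[-> ->] // | /IH].
- by rewrite propS_rcons_rej.
Qed.

Lemma feasible_rej_ousted K s r h : feasible K s -> (r, h) \in rejS s -> ousted K (propS s) r h.
Proof.
elim=> [|s0 r' h' _ IH _ _ _ _ | s0 r' h' _ IH out _]; first by rewrite inE.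
- rewrite propS_rcons_prop rejS_rcons_prop => /IH; apply: ousted_subset; exact: subsetUr.
- by rewrite propS_rcons_rej rejS_rcons_rej in_setU1 => /orP[/eqP[-> ->] // | /IH].
Qed.

Lemma feasible_rej_prop K s m : feasible K s -> m \in rejS s -> m \in propS s.
Proof. by case: m => r h Ks /(feasible_rej_ousted Ks) /ousted_mem. Qed.

Lemma feasible_rej_before K s r h h' : feasible K s ->
  (r, h) \in propS s -> precedes h' h (rlist K r) -> (r, h') \in rejS s.
Proof.
elim=> [|s0 r0 h0 _ IH _ _ _ before | s0 r0 h0 _ IH _ _]; first by rewrite inE.
- rewrite propS_rcons_prop rejS_rcons_prop in_setU1.
  by case/orP=> [/eqP[-> ->] | /IH]; [exact: before |].
- by rewrite propS_rcons_rej rejS_rcons_rej in_setU1 => /IH rej /rej ->; rewrite orbT.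
Qed.

Lemma feasible_tent_functional K s r h h' : feasible K s ->
  (r, h) \in tentS s -> (r, h') \in tentS s -> h = h'.
Proof.
move=> Ks; elim: Ks h h' => [|s0 r0 h0 _ IH free _ _ _ | s0 r0 h0 _ IH _ _] h h'.
- by rewrite in_setD inE.
- have tent_new g : (r, g) \in tentS (rcons s0 (true, (r0, h0))) ->
      ((r, g) == (r0, h0)) || ((r, g) \in tentS s0).
    rewrite !in_setD propS_rcons_prop rejS_rcons_prop in_setU1.
    by case/andP=> nr /orP[-> // | p]; rewrite nr p orbT.
  have not_free g : (r, g) \in tentS s0 -> r != r0.
    by apply: contraTneq => ->; apply: contra free => /mem_res.
  move=> /tent_new /orP[/eqP[er eh] | t_h] /tent_new /orP[/eqP[er' eh'] | t_h'].
  + by rewrite eh eh'.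
  + by move/not_free: t_h'; rewrite er eqxx.
  + by move/not_free: t_h; rewrite er' eqxx.
  + exact: IH t_h t_h'.
- have tent_sub g : (r, g) \in tentS (rcons s0 (false, (r0, h0))) -> (r, g) \in tentS s0.
    by rewrite !in_setD propS_rcons_rej rejS_rcons_rej in_setU1 negb_or => /andP[/andP[_ ->]].
  by move=> /tent_sub t_h /tent_sub; apply: IH.
Qed.

Lemma feasible_size K s : feasible K s -> size s <= #|{: event R H}|.
Proof. by move/feasible_uniq/card_uniqP <-; apply: max_card. Qed.

Lemma maximal_feasible_exists K : exists t, maximal_feasible K t.
Proof.
suff extend n s : #|{: event R H}| - size s <= n -> feasible K s ->
    exists t, maximal_feasible K t.
  by apply: (extend _ [::] (leqnn _)); constructor.
elim: n s => [|n IH] s room Ks.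
  by exists s; split=> // e /feasible_size; rewrite size_rcons; lia.
have [[e Kse] | stuck] := classic (exists e, feasible K (rcons s e)).
  by apply: (IH (rcons s e)) Kse; rewrite size_rcons; lia.
by exists s; split=> // e Kse; apply: stuck; exists e.
Qed.

Lemma max_seqP K : maximal_feasible K (max_seq K).
Proof. exact: (epsilon_spec _ _ (maximal_feasible_exists K)). Qed.

Lemma maximal_ousted_rej K t r h : maximal_feasible K t ->
  ousted K (propS t) r h -> (r, h) \in rejS t.
Proof.
case=> Kt maxt out; apply/negPn/negP => nrej.
by apply: (maxt (false, (r, h))); apply: feas_rej.
Qed.

Lemma maximal_free_prop K t r h : maximal_feasible K t ->
  r \notin res (tentS t) -> h \in rlist K r -> (r, h) \in propS t.
Proof.
case=> Kt maxt free; set l := rlist K r.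
suff nth_prop i : i < size l -> (r, nth h l i) \in propS t.
  by move=> hL; rewrite -(nth_index h hL); apply: nth_prop; rewrite index_mem.
elim/ltn_ind: i => i IH il; apply/negPn/negP => np.
apply: (maxt (true, (r, nth h l i))); apply: feas_prop => //; first exact: mem_nth.
move=> h' /andP[h'L before].
have rh'_prop : (r, h') \in propS t.
  rewrite -(nth_index h h'L); apply: IH; last by rewrite index_mem.
  exact: leq_trans before (index_nth _ il).
apply: contraNT free => nrej.
by apply/imsetP; exists (r, h'); rewrite ?in_setD ?nrej.
Qed.

Lemma feasible_sub_maximal K s t : feasible K s -> maximal_feasible K t ->
  propS s \subset propS t /\ rejS s \subset rejS t.
Proof.
move=> Ks maxt; have Kt := proj1 maxt.
elim: Ks => [|s0 r h _ [IHp IHr] _ _ hL before | s0 r h _ [IHp IHr] out _].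
- by split; apply/subsetP => m; rewrite inE.
- rewrite propS_rcons_prop rejS_rcons_prop subUset sub1set IHp andbT; split=> //.
  have [/imsetP[[r' g] tg /= er] | free] := boolP (r \in res (tentS t)); last first.
    exact: maximal_free_prop maxt free hL.
  move: tg; rewrite -er in_setD => /andP[nrg prg].
  have gL := feasible_prop_listed Kt prg.
  case: (ltngtP (index h (rlist K r)) (index g (rlist K r))) => [hg | gh | hg].
  + apply: (feasible_rej_prop Kt); apply: (feasible_rej_before Kt prg).
    by rewrite /precedes hL hg.
  + have : (r, g) \in rejS s0 by apply: before; rewrite /precedes gL.
    by move/(subsetP IHr); rewrite (negbTE nrg).
  + by rewrite (index_inj h hL gL hg).
- rewrite propS_rcons_rej rejS_rcons_rej subUset sub1set IHr andbT; split=> //.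
  by apply: maximal_ousted_rej maxt _; apply: ousted_subset out.
Qed.

Lemma maximal_tent_card K t h : maximal_feasible K t ->
  (forall r, r \in hlist K h) -> uniq (hlist K h) -> #|res_h (tentS t) h| <= quota K h.
Proof.
move=> maxt complete Ul; set T := res_h (tentS t) h; set l := hlist K h.
rewrite leqNgt; apply/negP => over.
have /set0Pn[y0 y0T] : T != set0 by rewrite -card_gt0 (leq_ltn_trans _ over).
case: (@arg_maxnP _ y0 (fun x => x \in T) (fun x => index x l) y0T) => y yT ymax.
move: (yT); rewrite /T res_hE in_setD => /andP[nrej prop].
have filled : quota K h <= count (fun x => x \in res_h (propS t) h) (take (index y l) l).
  rewrite count_take_card ?index_size //; move: over; rewrite (cardsD1 y T) yT add1n ltnS.
  move/leq_trans; apply; apply: subset_leq_card; apply/subsetP => x.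
  rewrite in_setD1 inE res_hE => /andP[xy xT]; move: (xT); rewrite res_hE in_setD.
  case/andP=> _ ->; rewrite ltn_neqAle (ymax x xT : index x l <= index y l) andbT /=.
  by apply: contra xy => /eqP/(index_inj x (complete x) (complete y)) ->.
have : ousted K (propS t) y h.
  apply/and3P; split=> //; last by rewrite complete filled orbT.
  by apply: leq_trans filled (leq_count_subseq _ (take_subseq _ _)).
by move/(maximal_ousted_rej maxt); rewrite (negbTE nrej).
Qed.

End FeasibleSequences.

(* Quotas and hospital lists are those of [I], so [ousted] means the same in both
   instances by conversion. *)
Definition extend_by (R H : finType) (I : instance R H) (P : {set match_t R H}) :=
  Instance (quota I) (fun r => rlist I r ++ [seq h <- enum H | (r, h) \in P]) (hlist I).

Section ExtensionByPrescription.
Variables (R H : finType) (I : instance R H) (P X : {set match_t R H}).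
Implicit Types (r : R) (h : H) (m : match_t R H).

Local Notation J := (extend_by I P).
Local Notation pI := (propS (max_seq I)).
Local Notation rI := (rejS (max_seq I)).
Local Notation tI := (tentS (max_seq I)).
Local Notation pJ := (propS (max_seq J)).
Local Notation rJ := (rejS (max_seq J)).
Local Notation tJ := (tentS (max_seq J)).
Local Notation seats := (P :|: (tI :\: X)).

Hypothesis I_valid : valid_instance I.
Hypothesis I_resident_minimal : resident_minimal I.
Hypothesis I_complete : hospital_complete I.
Hypothesis P_fresh : P :&: pI = set0.
Hypothesis P_functional : forall r h h', (r, h) \in P -> (r, h') \in P -> h = h'.
Hypothesis X_tent : X \subset tI.
Hypothesis res_P_tent : res P :&: res tI \subset res X.
Hypothesis seats_quota : forall h, #|res_h seats h| <= quota I h /\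
  (res_h X h != set0 -> #|res_h seats h| = quota I h).
Hypothesis seats_before_X : forall h r r',
  r \in res_h seats h -> r' \in res_h X h -> precedes r r' (hlist I h).

Lemma mem_propI r h : ((r, h) \in pI) = (h \in rlist I r).
Proof. by move: I_resident_minimal; rewrite /resident_minimal /propI => ->; rewrite inE. Qed.

Lemma P_notin_propI m : m \in P -> m \notin pI.
Proof. by move=> mP; apply/negP => mpI; move/setP/(_ m): P_fresh; rewrite in_setI mP mpI inE. Qed.

Lemma tentI_propI m : m \in tI -> m \in pI.
Proof. by rewrite in_setD => /andP[]. Qed.

Lemma X_propI m : m \in X -> m \in pI.
Proof. by move/(subsetP X_tent)/tentI_propI. Qed.

Lemma mem_rlist_extend r h : (h \in rlist J r) = (h \in rlist I r) || ((r, h) \in P).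
Proof. by rewrite mem_cat mem_filter mem_enum andbT. Qed.

Lemma extend_valid : valid_instance J.
Proof.
case: I_valid => quota_gt0 [r_uniq h_uniq]; split=> //; split=> // r.
rewrite cat_uniq r_uniq filter_uniq ?enum_uniq // andbT /=.
by apply/hasPn => h; rewrite mem_filter mem_enum andbT => /P_notin_propI; rewrite mem_propI.
Qed.

Lemma extend_extension : extension I J.
Proof. by split=> //; split=> [r | h]; [apply: prefix_prefix | apply: prefix_refl]. Qed.

Lemma feasible_extend s : feasible I s -> feasible J s.
Proof.
elim=> [|s0 r h _ Js0 free fresh hL before | s0 r h _ Js0 out fresh]; first exact: feas_nil.
- apply: feas_prop => //; first by rewrite mem_rlist_extend hL.
  by move=> h' /(precedes_catl hL); apply: before.
- exact: feas_rej.
Qed.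

Lemma propI_rejI_sub : pI \subset pJ /\ rI \subset rJ.
Proof. exact: feasible_sub_maximal (feasible_extend (proj1 (max_seqP I))) (max_seqP J). Qed.

Lemma propJ_sub m : m \in pJ -> m \in pI :|: P.
Proof.
case: m => r h /(feasible_prop_listed (proj1 (max_seqP J))).
by rewrite mem_rlist_extend in_setU mem_propI.
Qed.

Lemma hlistI_uniq h : uniq (hlist I h).
Proof. by case: I_valid => _ []. Qed.

Lemma seated_before h r x : r \in res_h seats h ->
  index x (hlist I h) < index r (hlist I h) -> (x, h) \in pI :|: P -> (x, h) \notin rI ->
  x \in res_h seats h.
Proof.
move=> rS xr; rewrite in_setU res_hE in_setU => /orP[xpI | -> //] nrej.
rewrite !in_setD nrej xpI !andbT; apply/orP; right; apply: contraTN xr => xX.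
have xXh : x \in res_h X h by rewrite res_hE.
have /andP[_ rx] := seats_before_X rS xXh.
by rewrite -leqNgt ltnW.
Qed.

Lemma seats_count_lt h r k : r \in res_h seats h -> k <= index r (hlist I h) ->
  count (fun x => x \in res_h seats h) (take k (hlist I h)) < quota I h.
Proof.
move=> rS kr; rewrite count_take_card ?hlistI_uniq ?(leq_trans kr (index_size _ _)) //.
apply: leq_trans (proj1 (seats_quota h)); rewrite (cardsD1 r (res_h _ _)) rS add1n ltnS.
apply: subset_leq_card; apply/subsetP => x /setIdP[xS xk].
by rewrite in_setD1 xS andbT; apply: contraTneq xk => ->; rewrite -leqNgt.
Qed.

Lemma unrejected_not_ousted h r y : r \in res_h seats h ->
  index y (hlist I h) <= index r (hlist I h) ->
  (forall x, index x (hlist I h) < index y (hlist I h) -> (x, h) \notin rI) ->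
  ~~ ousted I (pI :|: P) y h.
Proof.
move=> rS yr unrej; apply/negP => /(ousted_count (I_complete h y)); apply/negP.
rewrite -ltnNge; apply: leq_ltn_trans (seats_count_lt rS yr).
rewrite !count_take_card ?hlistI_uniq ?index_size //; apply: subset_leq_card.
apply/subsetP => x /setIdP[xM xy]; apply/setIdP; split=> //.
by apply: seated_before rS (leq_trans xy yr) _ (unrej x xy); rewrite -res_hE.
Qed.

Lemma ousted_prescribed_rej r h : (r, h) \in pI :|: P -> ousted I (pI :|: P) r h ->
  (r, h) \in rI :|: X.
Proof.
move=> rM out; apply: contraT; rewrite in_setU negb_or => /andP[nrej nX].
have rS : r \in res_h seats h.
  by move: rM; rewrite res_hE !in_setU !in_setD nrej nX orbC.
set l := hlist I h; set k := find (fun x => (x, h) \in rI) l.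
have before_k x : index x l < k -> (x, h) \notin rI.
  by move=> xk; rewrite -(nth_index x (I_complete h x)); apply/negbT/(before_find _ xk).
(* Either the first resident rejected at h in I precedes r, and it could not have
   been ousted, or nobody before r was rejected, and r itself is not ousted. *)
have [kr | rk] := ltnP k (index r l).
  have kl : k < size l := leq_trans kr (index_size r l).
  have zk : index (nth r l k) l = k := index_uniq r kl (hlistI_uniq h).
  have zrej : (nth r l k, h) \in rI.
    by apply: (@nth_find _ r (fun x => (x, h) \in rI)); rewrite has_find.
  have /negP[] : ~~ ousted I (pI :|: P) (nth r l k) h.
    by apply: unrejected_not_ousted rS _ _ => [| x]; rewrite zk ?(ltnW kr) // => /before_k.
  apply: ousted_subset (subsetUl _ P) _.
  exact: feasible_rej_ousted (proj1 (max_seqP I)) zrej.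
have /negP[] := unrejected_not_ousted rS (leqnn _) (fun x xr => before_k x (leq_trans xr rk)).
exact: out.
Qed.

Lemma rejJ_sub m : m \in rJ -> m \in rI :|: X.
Proof.
case: m => r h /(feasible_rej_ousted (proj1 (max_seqP J))) out.
apply: ousted_prescribed_rej; first exact: propJ_sub (ousted_mem out).
by apply: ousted_subset out; apply/subsetP => m /propJ_sub.
Qed.

Lemma rejJ_propI m : m \in rJ -> m \in pI.
Proof.
by move/rejJ_sub; rewrite in_setU => /orP[/(feasible_rej_prop (proj1 (max_seqP I))) | /X_propI].
Qed.

Lemma tentJ_covers : (tI :\: X) :|: (P :&: pJ) :|: (X :\: rJ) \subset tJ.
Proof.
have [pI_pJ _] := propI_rejI_sub.
apply/subsetP => m; rewrite !in_setU in_setI !in_setD.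
case/orP=> [/orP[/andP[nX /andP[nrI mpI]] | /andP[mP mpJ]] | /andP[nrJ mX]].
- rewrite (subsetP pI_pJ) // andbT; apply: contra nX => /rejJ_sub.
  by rewrite in_setU (negbTE nrI).
- by rewrite mpJ andbT; apply/negP => /rejJ_propI; apply/negP; exact: P_notin_propI.
- by rewrite nrJ (subsetP pI_pJ) // X_propI.
Qed.

Lemma card_unrejected_X_at h : #|res_h (X :\: rJ) h| <= #|res_h (P :\: pJ) h|.
Proof.
have [/eqP X0 | Xh] := boolP (res_h X h == set0).
  by rewrite (leq_trans (subset_leq_card (res_hS h (subsetDl X rJ)))) // X0 cards0.
set B := (tI :\: X) :|: (P :&: pJ).
have seatsE : seats = B :|: (P :\: pJ) by rewrite -setUA setID setUC.
have B_P : [disjoint B & P :\: pJ].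
  rewrite disjoints_subset; apply/subsetP => m.
  rewrite in_setC in_setD negb_and negbK in_setU in_setI.
  case/orP=> [/setDP[/tentI_propI mpI _] | /andP[_ ->] //].
  by rewrite (contraL (@P_notin_propI m) mpI) orbT.
have B_X : [disjoint B & X :\: rJ].
  rewrite disjoints_subset; apply/subsetP => m.
  rewrite in_setC in_setD negb_and negbK in_setU in_setI.
  case/orP=> [/setDP[_ nX] | /andP[mP _]]; first by rewrite nX orbT.
  by rewrite (contra (@X_propI m) (P_notin_propI mP)) orbT.
have := (seats_quota h).2 Xh; rewrite seatsE res_hU card_disjU ?res_h_disjoint // => full.
have := subset_leq_card (res_hS h tentJ_covers); rewrite res_hU card_disjU ?res_h_disjoint //.
move/leq_trans/(_ (maximal_tent_card (max_seqP J) (I_complete h) (hlistI_uniq h))).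
by rewrite /= -full leq_add2l.
Qed.

Lemma unproposed_P_pending r h : (r, h) \in P -> (r, h) \notin pJ ->
  exists2 g, (r, g) \in X & (r, g) \notin rJ.
Proof.
move=> rhP rh_npJ.
have : r \in res tJ.
  apply: contraNT rh_npJ => free; apply: maximal_free_prop (max_seqP J) free _.
  by rewrite mem_rlist_extend rhP orbT.
case/imsetP=> -[r' g] /[swap] /= <- /setDP[rg_pJ rg_nrJ].
have rg_pI : (r, g) \in pI.
  move: (propJ_sub rg_pJ); rewrite in_setU => /orP[// | rgP].
  by move: rg_pJ; rewrite (P_functional rgP rhP) (negbTE rh_npJ).
have rg_tI : (r, g) \in tI.
  rewrite in_setD rg_pI andbT; apply: contra rg_nrJ; apply/subsetP.
  exact: propI_rejI_sub.2.
have /imsetP[[r'' g'] /[swap] /= <- rg'X] : r \in res X.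
  by apply: (subsetP res_P_tent); rewrite in_setI (mem_res rhP) (mem_res rg_tI).
have gg' : g = g' := feasible_tent_functional (proj1 (max_seqP I)) rg_tI (subsetP X_tent _ rg'X).
by exists g => //; rewrite gg'.
Qed.

Lemma tgs_sub_rejJ : tgs P X \subset rJ.
Proof.
set U := P :\: pJ; set V := X :\: rJ; set B := [set m : match_t R H | m.1 \in res P].
have V_U : #|V| <= #|U|.
  by rewrite !card_sum_res_h; apply: leq_sum => h _; apply: card_unrejected_X_at.
have card_res_U : #|res U| = #|U|.
  apply: card_in_imset => -[r h] [r' h'] /setDP[rhP _] /setDP[rh'P _] /= er.
  by move: rh'P; rewrite -er => /(P_functional rhP) ->.
have res_U_sub : res U \subset res (V :&: B).
  apply/subsetP => _ /imsetP[[r h] /setDP[rhP rh_npJ] ->] /=.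
  have [g rgX rg_nrJ] := unproposed_P_pending rhP rh_npJ.
  by apply: (mem_res (m := (r, g))); rewrite in_setI in_setD rgX rg_nrJ inE (mem_res rhP).
have /eqP VB : V :&: B == V.
  rewrite eqEcard subsetIl (leq_trans V_U) // -card_res_U.
  exact: leq_trans (subset_leq_card res_U_sub) (leq_imset_card _ _).
apply/subsetP => m /setIdP[mX m_nP]; apply: contraT => m_nrJ.
have : m \in V :&: B by rewrite VB in_setD mX m_nrJ.
by case/setIP => _; rewrite /B in_set (negbTE m_nP).
Qed.

Lemma extend_by_prescription :
  valid_instance J /\ simple_extension I J /\ propI J :\: propI I \subset P /\
  rejI J :\: rejI I \subset X /\ tgs P X \subset rejI J.
Proof.
have new_prop : pJ :\: pI \subset P.
  by apply/subsetP => m /setDP[/propJ_sub + m_npI]; rewrite in_setU (negbTE m_npI).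
have new_rej : rJ :\: rI \subset X.
  by apply/subsetP => m /setDP[/rejJ_sub + m_nrI]; rewrite in_setU (negbTE m_nrI).
have simple : simple_extension I J.
  split; first exact: extend_extension.
  apply/setP => m; rewrite in_set0 in_setI.
  by apply/negP => /andP[/setDP[_ m_npI] /setDP[/rejJ_propI mpI _]]; rewrite mpI in m_npI.
exact: conj extend_valid (conj simple (conj new_prop (conj new_rej tgs_sub_rejJ))).
Qed.

End ExtensionByPrescription.

Theorem lemma1 (R H : finType) (I : instance R H) (P X : {set match_t R H}) :
  valid_instance I -> resident_minimal I -> hospital_complete I ->
  prescription I P X ->
  exists J : instance R H,
    valid_instance J /\ simple_extension I J /\
    propI J :\: propI I \subset P /\
    rejI J :\: rejI I \subset X /\
    tgs P X \subset rejI J.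
Proof.
move=> I_valid I_min I_complete [P_fresh [P_fun [X_tent [res_P [seats_quota seats_before]]]]].
by exists (extend_by I P); apply: extend_by_prescription.
Qed.
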